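(* Every finite simple graph $G$ can be embedded in any projective plane of order $q$ with $q\ge v(G)(v(G)-1)/2$.
   Context: $v(G)$ is the number of vertices of $G$. A finite projective plane of order $q$ has $q^2+q+1$ points and lines, $q+1$ points on each line and $q+1$ lines through each point; any two distinct points lie on a unique line and any two lines meet in a unique point. An embedding of a simple graph $G=(V,E)$ into a projective plane is an injective map $\phi$ from $V$ to the points such that the induced map sending an edge $ab$ to the line through $\phi(a),\phi(b)$ is injective on $E$. *)

From mathcomp Require Import all_boot.
Set Implicit Arguments. Unset Strict Implicit. Unset Printing Implicit Defensive.

Definition projective_plane (P L : finType) (inc : P -> L -> bool) (q : nat) : Prop :=
  #|P| = q ^ 2 + q + 1 /\
      #|L| = q ^ 2 + q + 1 /\
      (forall l : L, #|[set p | inc p l]| = q.+1) /\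
      (forall p : P, #|[set l | inc p l]| = q.+1) /\
      (forall p1 p2 : P, p1 != p2 -> exists! l : L, inc p1 l && inc p2 l) /\
      (forall l1 l2 : L, l1 != l2 -> exists! p : P, inc p l1 && inc p l2).

Definition simple_graph (V : finType) (adj : rel V) : Prop :=
  symmetric adj /\ irreflexive adj.

(* phi embeds (V, adj) into the plane: phi is injective on vertices, and the
   map sending an edge ab to the line through phi a, phi b is injective on
   edges.  Since the line through two distinct points is unique, two edges
   have the same image line iff some line contains all four image points. *)
Definition embedding (V P L : finType) (adj : rel V) (inc : P -> L -> bool)
    (phi : V -> P) : Prop :=
  injective phi /\
  (forall a b c d : V, adj a b -> adj c d ->
     forall l : L, inc (phi a) l -> inc (phi b) l -> inc (phi c) l -> inc (phi d) l ->
       (a = c /\ b = d) \/ (a = d /\ b = c)).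

From mathcomp Require Import all_boot.
From mathcomp Require Import zify.
Set Implicit Arguments. Unset Strict Implicit.

(* An arc (no three collinear points) of size k is built greedily: the k-1
   points chosen so far span at most 'C(k-1, 2) secants, which together with
   the arc cover fewer than q^2 + q + 1 points as long as 'C(k, 2) <= q; any
   uncovered point extends the arc.  Mapping the vertices injectively onto an
   arc of size v(G) is an embedding, since a line meets the arc in at most
   two points. *)

Lemma leq_card_bigcup (T I : finType) (S : {pred I}) (F : I -> {set T}) :
  #|\bigcup_(i in S) F i| <= \sum_(i in S) #|F i|.
Proof.
elim/big_rec2: _ => [|i A n _ leAn]; first by rewrite cards0.
by rewrite cardsU (leq_trans (leq_subr _ _)) // leq_add2l.
Qed.

Lemma exists_inj_into (T U : finType) (A : {set U}) :
  #|T| <= #|A| -> exists2 f : T -> U, injective f & forall t, f t \in A.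
Proof.
move=> leTA; exists (fun t => enum_val (widen_ord leTA (enum_rank t))).
  by move=> t u /enum_val_inj /(congr1 val) /= /val_inj; exact: (@enum_rank_inj T).
by move=> t; exact: enum_valP.
Qed.

Section Arcs.

Variables (P L : finType) (inc : P -> L -> bool).

Definition on_line (l : L) : {set P} := [set p | inc p l].

Definition arc (A : {set P}) : Prop := forall l, #|A :&: on_line l| <= 2.

Definition secants (A : {set P}) : {set L} := [set l | 1 < #|A :&: on_line l|].

Lemma arc_collinear (A : {set P}) (l : L) (x y z : P) :
  arc A -> x != y -> x \in A -> y \in A -> z \in A ->
  inc x l -> inc y l -> inc z l -> z = x \/ z = y.
Proof.
move=> arcA neq_xy Ax Ay Az xl yl zl.
case: (eqVneq z x) => [|neq_zx]; first by left.
case: (eqVneq z y) => [|neq_zy]; first by right.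
have sub_xyz : z |: [set x; y] \subset A :&: on_line l.
  by apply/subsetP => p; rewrite !inE => /or3P[] /eqP->; rewrite ?Ax ?Ay ?Az ?xl ?yl ?zl.
have := leq_trans (subset_leq_card sub_xyz) (arcA l).
by rewrite cardsU1 cards2 !inE neq_xy negb_or neq_zx neq_zy.
Qed.

Lemma arc_embedding (V : finType) (adj : rel V) (A : {set P}) (phi : V -> P) :
  irreflexive adj -> arc A -> injective phi -> (forall v, phi v \in A) ->
  embedding adj inc phi.
Proof.
move=> irr arcA inj_phi phiA; split=> // a b c d ab cd l al bl cl dl.
have neq_ab : phi a != phi b.
  by rewrite (inj_eq inj_phi); apply: contraTneq ab => ->; rewrite irr.
have neq_cd : c != d by apply: contraTneq cd => ->; rewrite irr.
have on_ab z : inc (phi z) l -> z = a \/ z = b.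
  by move=> zl; case: (arc_collinear arcA neq_ab _ _ (phiA z) al bl zl) => // /inj_phi;
    [left | right].
by case: (on_ab c cl) (on_ab d dl) neq_cd => -> [] ->; rewrite ?eqxx; auto.
Qed.

Variable q : nat.
Hypothesis plane : projective_plane inc q.

Lemma line_through_unique (x y : P) (l l' : L) :
  x != y -> inc x l -> inc y l -> inc x l' -> inc y l' -> l = l'.
Proof.
case: plane => _ [_ [_ [_ [ex_line _]]]] neq_xy xl yl xl' yl'.
have [l0 [_ uniq_l0]] := ex_line x y neq_xy.
by rewrite -(uniq_l0 l) ?xl ?yl // -(uniq_l0 l') ?xl' ?yl'.
Qed.

Lemma card_secants (A : {set P}) : #|secants A| <= 'C(#|A|, 2).
Proof.
pose pairs := [set B : {set P} | B \subset A & #|B| == 2].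
pose line_of (B : {set P}) := [pick l | B \subset on_line l].
rewrite -cards_draws -/pairs -(card_imset _ (@Some_inj _)).
apply: leq_trans (leq_imset_card line_of pairs); apply: subset_leq_card.
apply/subsetP => _ /imsetP[l + ->]; rewrite inE => /card_gt1P[x [y [+ + neq_xy]]].
rewrite !inE => /andP[Ax xl] /andP[Ay yl].
apply/imsetP; exists [set x; y].
  by rewrite inE cards2 neq_xy eqxx andbT; apply/subsetP => p; rewrite !inE => /orP[] /eqP->.
have sub_l : [set x; y] \subset on_line l.
  by apply/subsetP => p; rewrite !inE => /orP[] /eqP->.
rewrite /line_of; case: pickP => [l' /subsetP sub_l' | /(_ l)]; last by rewrite sub_l.
have /[!inE] xl' := sub_l' x (set21 x y); have /[!inE] yl' := sub_l' y (set22 x y).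
by rewrite (line_through_unique neq_xy xl yl xl' yl').
Qed.

Lemma arc_extension (A : {set P}) :
  arc A -> 'C(#|A|.+1, 2) <= q -> exists2 p, p \notin A & arc (p |: A).
Proof.
case: (plane) => cardP [_ [card_line _]] arcA.
rewrite binS bin1 => le_q.
pose covered := A :|: \bigcup_(l in secants A) on_line l.
have lt_covered : #|covered| < #|P|.
  have le_lines : #|\bigcup_(l in secants A) on_line l| <= #|secants A| * q.+1.
    apply: leq_trans (leq_card_bigcup _ _) _.
    by under eq_bigr => l _ do rewrite card_line; rewrite sum_nat_const.
  have le_secants := card_secants A.
  by rewrite cardP (leq_ltn_trans (leq_card_setU _ _).1) //; nia.
have /card_gt0P[p] : 0 < #|~: covered|.
  by move: lt_covered; rewrite -(cardsC covered); lia.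
rewrite !inE negb_or => /andP[notAp /bigcupP not_secant].
exists p => // l; rewrite setIUl (leq_trans (leq_card_setU _ _).1) //.
have [pl | npl] := boolP (inc p l).
  have le1 : #|A :&: on_line l| <= 1.
    by rewrite leqNgt; apply/negP => sec_l; apply: not_secant; exists l; rewrite !inE.
  by rewrite -[2]/(1 + 1) leq_add // -(cards1 p) subset_leq_card ?subsetIl.
suff -> : [set p] :&: on_line l = set0 by rewrite cards0 arcA.
by apply/setP => x; rewrite !inE; case: eqP => // ->; exact: negbTE.
Qed.

Lemma exists_arc (k : nat) : 'C(k, 2) <= q -> exists2 A, arc A & #|A| = k.
Proof.
elim: k => [_|k IH le_q].
  by exists set0; rewrite ?cards0 // => l; rewrite set0I cards0.
have [|A arcA cardA] := IH; first by apply: leq_trans le_q; rewrite binS leq_addr.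
rewrite -cardA in le_q *; have [p notAp arc_pA] := arc_extension arcA le_q.
by exists (p |: A); rewrite // cardsU1 notAp.
Qed.

End Arcs.

Theorem corollary2p16 (V : finType) (adj : rel V)
    (P L : finType) (inc : P -> L -> bool) (q : nat) :
  simple_graph adj ->
  projective_plane inc q ->
  #|V| * (#|V| - 1) %/ 2 <= q ->
  exists phi : V -> P, embedding adj inc phi.
Proof.
move=> [_ irr] plane le_q.
have [A arcA cardA] : exists2 A, arc inc A & #|A| = #|V|.
  by apply: exists_arc plane _ _; rewrite bin2 -divn2 -subn1.
have [phi inj_phi phiA] := exists_inj_into (T := V) (eq_leq (esym cardA)).
by exists phi; apply: arc_embedding arcA inj_phi phiA.
Qed.
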